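(* Let $A\in\mathbb{R}^{m\times N}$, let $x\in\mathbb{R}^N$ be a nonzero $k$-sparse vector and $q\in(1,\infty]$. If $\rho_{q,3^{q/(q-1)}k}(A)>0$, then the unique solution of $\min_{z\in\mathbb{R}^N\setminus\{0\}}\lVert z\rVert_1/\lVert z\rVert_q$ subject to $Az=Ax$ is $x$.
   Context: For nonzero $z\in\mathbb{R}^N$ and $q\in(1,\infty)$, $s_q(z)=\left(\lVert z\rVert_1/\lVert z\rVert_q\right)^{q/(q-1)}$, and $s_\infty(z)=\lVert z\rVert_1/\lVert z\rVert_\infty$. For real $s\ge1$, $\rho_{q,s}(A)=\min\{\lVert Az\rVert_2/\lVert z\rVert_q: z\ne0,\ s_q(z)\le s\}$. For $q=\infty$ interpret $q/(q-1)=1$. A vector is $k$-sparse if it has at most $k$ nonzero entries. *)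

From HB Require Import structures.
From mathcomp Require Import all_boot all_order all_algebra.
From mathcomp Require Import all_classical all_reals all_analysis.
Set Implicit Arguments. Unset Strict Implicit. Unset Printing Implicit Defensive.
Import Order.TTheory GRing.Theory Num.Theory.
Local Open Scope classical_set_scope.
Local Open Scope ring_scope.

Section Defs.
Variable R : realType.

Definition l1_norm (N : nat) (z : 'cV[R]_N) : R := \sum_(i < N) `|z i 0|.

Definition l2_norm (m : nat) (z : 'cV[R]_m) : R := Num.sqrt (\sum_(i < m) (z i 0) ^+ 2).

(* lq norm, q in the extended reals; q = +oo gives the max norm.
   (Only used for q in (1, +oo].) *)
Definition lq_norm (q : \bar R) (N : nat) (z : 'cV[R]_N) : R :=
  match q with
  | EFin r => (\sum_(i < N) `|z i 0| `^ r) `^ (r^-1)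
  | +oo%E => \big[Num.max/0]_(i < N) `|z i 0|
  | -oo%E => 0
  end.

Definition q_conj_exp (q : \bar R) : R :=
  match q with
  | EFin r => r / (r - 1)
  | _ => 1
  end.

Definition s_q (q : \bar R) (N : nat) (z : 'cV[R]_N) : R :=
  (l1_norm z / lq_norm q z) `^ (q_conj_exp q).

(* rho_{q,s}(A) = min { ||Az||_2/||z||_q : z <> 0, s_q(z) <= s },
   written as the infimum of that set (the minimum is attained). *)
Definition rho_qs (q : \bar R) (s : R) (m N : nat) (A : 'M[R]_(m, N)) : R :=
  inf [set r : R | exists z : 'cV[R]_N,
         [/\ z != 0, s_q q z <= s & r = l2_norm (A *m z) / lq_norm q z]].

Definition ksparse (k N : nat) (x : 'cV[R]_N) : Prop :=
  (#|[set i : 'I_N | x i ord0 != 0%R]| <= k)%N.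

Definition l1lq_ratio (q : \bar R) (N : nat) (z : 'cV[R]_N) : R := l1_norm z / lq_norm q z.

End Defs.

From HB Require Import structures.
From mathcomp Require Import all_boot all_order all_algebra.
From mathcomp Require Import all_classical all_reals all_analysis.
From mathcomp Require Import lra.
Import Order.TTheory GRing.Theory Num.Theory.
Set Implicit Arguments. Unset Strict Implicit. Unset Printing Implicit Defensive.
Local Open Scope classical_set_scope.
Local Open Scope ring_scope.

(* Let [S] be the support of [x], [p = q/(q-1)] and [c = k^(1/p)]. Hölder gives
   [||z_S||_1 <= c ||z||_q] for every [z], and [rho > 0] says that every nonzero [h]
   in the kernel of [A] has [s_q(h) > 3^p k], i.e. [||h||_1 > 3 c ||h||_q]. If
   [w = x + h] satisfied [||w||_1/||w||_q <= t := ||x||_1/||x||_q <= c], then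
   [||x||_1 + ||h||_1 - 2 ||h_S||_1 <= ||w||_1 <= t (||x||_q + ||h||_q)
                                     <= ||x||_1 + c ||h||_q],
   whence [||h||_1 <= 3 c ||h||_q], a contradiction. *)

Section PowerSums.
Variable R : realType.
Implicit Types (a p r : R).

Lemma powRrVK a p : 0 <= a -> p != 0 -> (a `^ p^-1) `^ p = a.
Proof. by move=> a0 p0; rewrite -powRrM mulVf // powRr1. Qed.

Lemma conj_expVD r : 1 < r -> r^-1 + (r / (r - 1))^-1 = 1.
Proof.
move=> r1; have r0 : r != 0 by rewrite gt_eqF // (lt_trans _ r1).
by rewrite invf_div mulrBl divff // mul1r addrC subrK.
Qed.

Lemma sum_powR_ge0 (I : Type) (s : seq I) (P : pred I) (f : I -> R) r :
  0 <= \sum_(i <- s | P i) f i `^ r.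
Proof. by apply: sumr_ge0 => i _; exact: powR_ge0. Qed.

Lemma hoelder_sum (I : Type) (s : seq I) (f g : I -> R) p r :
  (forall i, 0 <= f i) -> (forall i, 0 <= g i) -> 0 < p -> 0 < r -> p^-1 + r^-1 = 1 ->
  \sum_(i <- s) f i * g i <=
    (\sum_(i <- s) f i `^ p) `^ p^-1 * (\sum_(i <- s) g i `^ r) `^ r^-1.
Proof.
move=> f0 g0 p0 r0 pr; elim: s => [|i s IH]; first by rewrite !big_nil mulr_ge0 ?powR_ge0.
rewrite !big_cons; apply: le_trans (lerD (lexx _) IH) _.
have := hoelder2 (f0 i) (powR_ge0 (\sum_(j <- s) f j `^ p) p^-1) (g0 i)
   (powR_ge0 (\sum_(j <- s) g j `^ r) r^-1) p0 r0 pr.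
by rewrite !powRrVK ?sum_powR_ge0 ?gt_eqF.
Qed.

Lemma minkowski_sum (I : Type) (s : seq I) (f g : I -> R) r :
  (forall i, 0 <= f i) -> (forall i, 0 <= g i) -> 1 < r ->
  (\sum_(i <- s) (f i + g i) `^ r) `^ r^-1 <=
    (\sum_(i <- s) f i `^ r) `^ r^-1 + (\sum_(i <- s) g i `^ r) `^ r^-1.
Proof.
move=> f0 g0 r1; have r0 : 0 < r by apply: lt_trans r1.
set r' := r / (r - 1); have r'0 : 0 < r' by rewrite divr_gt0 ?subr_gt0.
set S := \sum_(i <- s) _; have S0 : 0 <= S by exact: sum_powR_ge0.
have fg0 i : 0 <= f i + g i by rewrite addr_ge0.
(* [(f + g)^r = f (f + g)^(r-1) + g (f + g)^(r-1)], and Hölder with the conjugate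
   exponent [r'] bounds each part, using [(r - 1) r' = r]. *)
have hoelder_part h : (forall i, 0 <= h i) ->
    \sum_(i <- s) h i * (f i + g i) `^ (r - 1) <=
      (\sum_(i <- s) h i `^ r) `^ r^-1 * S `^ r'^-1.
  move=> h0; have -> : S = \sum_(i <- s) ((f i + g i) `^ (r - 1)) `^ r'.
    apply: eq_bigr => i _; rewrite -powRrM /r' mulrCA divff ?mulr1 //.
    by rewrite subr_eq0 gt_eqF.
  exact (hoelder_sum s h0 (fun i => powR_ge0 (f i + g i) (r - 1)) r0 r'0 (conj_expVD r1)).
have S_le : S <=
    ((\sum_(i <- s) f i `^ r) `^ r^-1 + (\sum_(i <- s) g i `^ r) `^ r^-1) * S `^ r'^-1.
  have S_split : S = \sum_(i <- s) f i * (f i + g i) `^ (r - 1) +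
                     \sum_(i <- s) g i * (f i + g i) `^ (r - 1).
    rewrite -big_split /=; apply: eq_bigr => i _.
    by rewrite -mulrDl mulr_powRB1.
  by rewrite {1}S_split mulrDl lerD // hoelder_part.
clearbody S; have [S'0|S'0] := eqVneq (S `^ r'^-1) 0.
  rewrite (powR_eq0_eq0 S'0) powR0 ?invr_neq0 ?gt_eqF //.
  by rewrite addr_ge0 // powR_ge0.
have T0 : 0 < S `^ r'^-1 by rewrite lt0r S'0 powR_ge0.
rewrite -(ler_pM2r T0) -powRD; last by rewrite conj_expVD // oner_eq0.
by rewrite conj_expVD // powRr1.
Qed.

End PowerSums.

Section LqNorm.
Variables (R : realType) (N : nat).
Implicit Types (q : \bar R) (y z : 'cV[R]_N).

Lemma q_conj_exp_gt0 q : (1%:E < q)%E -> 0 < q_conj_exp q.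
Proof.
case: q => [r||] //=; rewrite lte_fin => r1.
by rewrite divr_gt0 ?subr_gt0 // (lt_trans _ r1).
Qed.

Lemma lq_norm_ge0 q z : 0 <= lq_norm q z.
Proof.
case: q => [r||] /=; [exact: powR_ge0 | | exact: lexx].
by elim/big_ind: _ => // u v u0 v0; rewrite le_max u0.
Qed.

Lemma lq_norm_gt0 q z : (1%:E < q)%E -> z != 0 -> 0 < lq_norm q z.
Proof.
move=> q1 /matrix0Pn [i [j]]; rewrite ord1 => zi.
case: q q1 => [r||] //= q1; last first.
  by apply: lt_le_trans (le_bigmax _ _ i); rewrite normr_gt0.
apply: powR_gt0; rewrite (bigD1 i) //=.
by rewrite ltr_pwDl ?powR_gt0 ?normr_gt0 ?sum_powR_ge0.
Qed.

Lemma lq_normD q y z : (1%:E < q)%E -> lq_norm q (y + z) <= lq_norm q y + lq_norm q z.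
Proof.
case: q => [r||] //= q1; last first.
  apply: bigmax_le => [|i _]; first by rewrite addr_ge0 // (lq_norm_ge0 +oo%E).
  rewrite mxE; apply: le_trans (ler_normD _ _) _.
  by apply: lerD; exact: le_bigmax.
rewrite lte_fin in q1; have r0 : 0 < r by apply: lt_trans q1.
apply: le_trans (minkowski_sum _ (fun i => normr_ge0 _) (fun i => normr_ge0 _) q1).
apply: ge0_ler_powR; rewrite ?nnegrE ?invr_ge0 ?sum_powR_ge0 ?(ltW r0) //.
apply: ler_sum => i _; apply: ge0_ler_powR; rewrite ?nnegrE ?addr_ge0 ?(ltW r0) //.
by rewrite mxE ler_normD.
Qed.

Lemma sum_abs_le_lq_norm q (S : {pred 'I_N}) z : (1%:E < q)%E ->
  \sum_(i in S) `|z i 0| <= #|S|%:R `^ (q_conj_exp q)^-1 * lq_norm q z.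
Proof.
case: q => [r||] //= q1; last first.
  rewrite invr1 powRr1 // -sumr_const mulr_suml.
  by apply: ler_sum => i _; rewrite mul1r; exact: le_bigmax.
rewrite lte_fin in q1; have r0 : 0 < r by apply: lt_trans q1.
have r'0 : 0 < r / (r - 1) by rewrite divr_gt0 ?subr_gt0.
have sum_in_S : \sum_(i <- index_enum 'I_N) `|z i 0| * (i \in S)%:R = \sum_(i in S) `|z i 0|.
  by rewrite [RHS]big_mkcond; apply: eq_bigr => i _; case: (i \in S); rewrite ?mulr1 ?mulr0.
have card_S : \sum_(i <- index_enum 'I_N) (i \in S)%:R `^ (r / (r - 1)) = #|S|%:R :> R.
  rewrite -sumr_const [RHS]big_mkcond; apply: eq_bigr => i _.
  by case: (i \in S) => /=; rewrite ?mulr1n ?powR1 // mulr0n powR0 // gt_eqF.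
have := hoelder_sum (index_enum 'I_N) (fun i => normr_ge0 (z i 0))
   (fun i => ler0n _ (i \in S)) r0 r'0 (conj_expVD q1).
by rewrite sum_in_S card_S mulrC.
Qed.

End LqNorm.

Section L1Norm.
Variables (R : realType) (N : nat) (S : {pred 'I_N}).
Implicit Types (x h : 'cV[R]_N).

Lemma l1_norm_supported x : (forall i, i \notin S -> x i 0 = 0) ->
  l1_norm x = \sum_(i in S) `|x i 0|.
Proof.
move=> xS; rewrite /l1_norm [RHS]big_mkcond; apply: eq_bigr => i _.
by case: ifPn => // /xS ->; rewrite normr0.
Qed.

Lemma l1_normD_ge_supported x h : (forall i, i \notin S -> x i 0 = 0) ->
  l1_norm x + l1_norm h - 2 * \sum_(i in S) `|h i 0| <= l1_norm (x + h).
Proof.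
move=> xS; rewrite /l1_norm mulr_sumr [X in _ - X]big_mkcond -big_split -sumrB /=.
apply: ler_sum => i _; rewrite mxE; case: ifPn => iS.
  by rewrite mulr2n mulrDl mul1r opprD addrA addrK lerB_normD.
by rewrite xS // normr0 !add0r subr0.
Qed.

End L1Norm.

Section NullSpaceProperty.
Variables (R : realType) (N : nat) (n : 'cV[R]_N -> R) (c : R) (S : {pred 'I_N}).
Hypothesis n_gt0 : forall z : 'cV[R]_N, z != 0 -> 0 < n z.
Hypothesis n_triangle : forall y z : 'cV[R]_N, n (y + z) <= n y + n z.
Hypothesis sum_S_le : forall z : 'cV[R]_N, \sum_(i in S) `|z i 0| <= c * n z.

Lemma null_space_ratio_lt m (A : 'M[R]_(m, N)) (x w : 'cV[R]_N) :
  (forall h : 'cV[R]_N, h != 0 -> A *m h = 0 -> 3 * c * n h < l1_norm h) ->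
  (forall i, i \notin S -> x i 0 = 0) ->
  x != 0 -> w != 0 -> A *m w = A *m x -> w != x ->
  l1_norm x / n x < l1_norm w / n w.
Proof.
move=> nsp xS x0 w0 Aw wx.
pose h := w - x; have h0 : h != 0 by rewrite subr_eq0.
have Ah : A *m h = 0 by rewrite mulmxBr Aw subrr.
have wE : w = x + h by rewrite addrC subrK.
rewrite wE in w0 *.
have nx := n_gt0 x0; have nh := n_gt0 h0; have nxh := n_gt0 w0.
rewrite ltNge; apply/negP => ratio_le.
set t := l1_norm x / n x in ratio_le.
have t_nx : t * n x = l1_norm x by rewrite /t divfK // gt_eqF.
have t_le_c : t <= c by rewrite /t ler_pdivrMr // (l1_norm_supported xS) sum_S_le.
have l1w_le : l1_norm (x + h) <= t * n x + t * n h.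
  have t0 : 0 <= t by apply: divr_ge0; [exact: sumr_ge0 | exact: ltW].
  have : l1_norm (x + h) <= t * n (x + h) by rewrite -ler_pdivrMr.
  by move/le_trans; apply; rewrite -mulrDr ler_wpM2l.
have th_le : t * n h <= c * n h by rewrite ler_wpM2r // ltW.
have := l1_normD_ge_supported h xS; have := sum_S_le h; have := nsp h h0 Ah.
lra.
Qed.

End NullSpaceProperty.

Section SparsityRatio.
Variables (R : realType) (N : nat).
Implicit Types (q : \bar R) (z : 'cV[R]_N).

Lemma ksparse_card k z : ksparse k z -> (#|[pred i | z i ord0 != 0%R]| <= k)%N.
Proof.
apply: leq_trans; apply/eq_leq/eq_card => i.
by rewrite inE; apply/idP/idP => [/mem_set | /set_mem].
Qed.

Lemma l1lq_ratio_ge0 q z : 0 <= l1lq_ratio q z.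
Proof. by rewrite divr_ge0 ?lq_norm_ge0 // sumr_ge0. Qed.

Lemma lt_l1lq_ratio q c z : 0 <= c -> (1%:E < q)%E ->
  c `^ q_conj_exp q < s_q q z -> c < l1lq_ratio q z.
Proof.
move=> c0 q1; apply: contraTT; rewrite -!leNgt => ratio_le.
apply: ge0_ler_powR; rewrite ?nnegrE ?l1lq_ratio_ge0 //.
exact: ltW (q_conj_exp_gt0 q1).
Qed.

Lemma rho_qs_gt0_kernel q s m (A : 'M[R]_(m, N)) z :
  0 < rho_qs q s A -> z != 0 -> A *m z = 0 -> s < s_q q z.
Proof.
rewrite /rho_qs; set E := [set r | _] => rho0 z0 Az; rewrite ltNge; apply/negP => sz.
have E0 : E 0.
  exists z; split => //.
  by rewrite Az /l2_norm big1 ?sqrtr0 ?mul0r // => i _; rewrite mxE expr2 mulr0.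
have E_lb : has_lbound E.
  by exists 0 => r [y [_ _ ->]]; rewrite divr_ge0 ?sqrtr_ge0 ?lq_norm_ge0.
by have := ge_inf E_lb E0; rewrite leNgt rho0.
Qed.

End SparsityRatio.

Theorem corollary1 (R : realType) (m N k : nat) (A : 'M[R]_(m, N))
  (x : 'cV[R]_N) (q : \bar R) :
  (1%:E < q)%E -> x != 0 -> ksparse k x ->
  0 < rho_qs q (3 `^ q_conj_exp q * k%:R) A ->
  [set z : 'cV[R]_N | [/\ z != 0, A *m z = A *m x &
      forall w : 'cV[R]_N, w != 0 -> A *m w = A *m x -> l1lq_ratio q z <= l1lq_ratio q w]]
  = [set x].
Proof.
move=> q1 x0 xk rho0.
have p0 := q_conj_exp_gt0 q1; set p := q_conj_exp q in p0 rho0.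
pose S := [pred i : 'I_N | x i 0 != 0]; pose c := k%:R `^ p^-1.
have c0 : 0 <= c by exact: powR_ge0.
have sum_S_le (z : 'cV[R]_N) : \sum_(i in S) `|z i 0| <= c * lq_norm q z.
  apply: le_trans (sum_abs_le_lq_norm S z q1) _; rewrite ler_wpM2r ?lq_norm_ge0 //.
  by rewrite ge0_ler_powR ?nnegrE ?invr_ge0 ?ler_nat ?ksparse_card // ltW.
have nsp (z : 'cV[R]_N) : z != 0 -> A *m z = 0 -> 3 * c * lq_norm q z < l1_norm z.
  move=> z0 Az; rewrite -ltr_pdivlMr ?lq_norm_gt0 //.
  apply: lt_l1lq_ratio; rewrite ?mulr_ge0 // powRM // powRrVK ?gt_eqF //.
  exact: rho_qs_gt0_kernel rho0 z0 Az.
have xS i : i \notin S -> x i 0 = 0 by rewrite inE negbK => /eqP.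
have ratio_lt := null_space_ratio_lt (fun z => lq_norm_gt0 q1)
  (fun y z => lq_normD y z q1) sum_S_le nsp xS x0.
apply/seteqP; split => z /=.
  case=> z0 Az z_min; apply/eqP; apply: contraT => zx.
  by have := lt_le_trans (ratio_lt z z0 Az zx) (z_min x x0 erefl); rewrite ltxx.
move=> ->; split=> // w w0 Aw.
by have [->|wx] := eqVneq w x; [exact: lexx | exact/ltW/ratio_lt].
Qed.
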